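(* If a topological space $X$ is productively countably tight, then $\mathsf{S}_1(\Omega_x, \Omega_x)$ holds for each $x \in X$; that is, for every $x \in X$ and every sequence $(A_n)_{n \in \omega}$ of elements of $\Omega_x$ one can select $a_n \in A_n$ such that $\{a_n : n \in \omega\} \in \Omega_x$.
   Context: For a point $x$ of a space $X$, $\Omega_x$ denotes the collection of all sets $A \subset X$ such that $x \notin A$ and $x \in \overline{A}$. A space is countably tight if for every point $y$ and every set $A$ with $y \in \overline{A}$ there is a countable $B \subset A$ with $y \in \overline{B}$. $X$ is productively countably tight if $X \times Y$ is countably tight for every countably tight space $Y$. *)

From HB Require Import structures.
From mathcomp Require Import all_boot all_order.
From mathcomp Require Import all_classical all_reals all_analysis.
Set Implicit Arguments. Unset Strict Implicit. Unset Printing Implicit Defensive.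
Local Open Scope classical_set_scope.

Definition Omega (X : topologicalType) (x : X) : set (set X) :=
  [set A | ~ A x /\ closure A x].

Definition countably_tight (X : topologicalType) : Prop :=
  forall (y : X) (A : set X), closure A y ->
    exists B : set X, B `<=` A /\ countable B /\ closure B y.

Definition productively_countably_tight (X : topologicalType) : Prop :=
  forall Y : topologicalType, countably_tight Y -> countably_tight (X * Y)%type.

Definition S1_Omega (X : topologicalType) (x : X) : Prop :=
  forall A : nat -> set X, (forall n, Omega x (A n)) ->
    exists a : nat -> X, (forall n, A n (a n)) /\ Omega x (range a).

From HB Require Import structures.
From mathcomp Require Import all_boot all_order.
From mathcomp Require Import all_classical all_reals all_analysis.
Set Implicit Arguments. Unset Strict Implicit. Unset Printing Implicit Defensive.
Local Open Scope classical_set_scope.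

(* Test productive countable tightness against the fan F with a spine for
   every b : nat -> nat.  Since X * F is countably tight, so is X, and each A_n
   contains a sequence e_n accumulating at x.  Put on the k-th point of spine b
   the value e_n (b k), where n codes the prefix b|k: as b k may be chosen after
   b|k, (x, apex) lies in the closure of this diagonal set, hence in that of a
   countable part E of it.  Above some height the prefixes of the countably many
   spines met by E are pairwise distinct, so each code n names at most one such
   point of E; selecting it as a_n keeps x in the closure of {a_n}. *)

(* The sequential fan with continuum many spines: [Some (b, k)] is the k-th
   point of the spine indexed by [b : nat -> nat], all of them isolated, and a
   neighbourhood of the apex [None] contains a tail of every spine. *)
Definition fan := option ((nat -> nat) * nat).
HB.instance Definition _ := Choice.on fan.

Definition fan_open (U : set fan) : Prop :=
  U None -> forall b, exists m, forall k, (m <= k)%N -> U (Some (b, k)).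

Lemma fan_openT : fan_open setT.
Proof. by move=> _ b; exists 0%N. Qed.

Lemma fan_openI : setI_closed fan_open.
Proof.
move=> U V oU oV [UN VN] b.
have [m1 Hm1] := oU UN b; have [m2 Hm2] := oV VN b.
exists (maxn m1 m2) => k; rewrite geq_max => /andP[k1 k2].
by split; [exact: Hm1|exact: Hm2].
Qed.

Lemma fan_openU (I : Type) (U : I -> set fan) :
  (forall i, fan_open (U i)) -> fan_open (\bigcup_i U i).
Proof.
move=> oU [i _ UiN] b; have [m Hm] := oU i UiN b.
by exists m => k mk; exists i => //; exact: Hm.
Qed.

HB.instance Definition _ :=
  isOpenTopological.Build fan fan_openT fan_openI fan_openU.

Lemma nbhs_fanE (y : fan) (U : set fan) :
  nbhs y U <-> exists V, [/\ fan_open V, V y & V `<=` U].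
Proof. by []. Qed.

Lemma countably_tight_fan : countably_tight fan.
Proof.
move=> [p|] A clA.
  have [y [Ay /= yp]] : A `&` [set Some p] !=set0.
    by apply: clA; apply/nbhs_fanE; exists [set Some p]; split.
  exists [set Some p]; split; first by move=> _ ->; rewrite -yp.
  by split; [exact: countable1|exact: subset_closure].
have [AN|nAN] := pselect (A None).
  exists [set None]; split; first by move=> _ ->.
  by split; [exact: countable1|exact: subset_closure].
have [b Ab] : exists b, forall m, exists2 k, (m <= k)%N & A (Some (b, k)).
  apply: contrapT => finA.
  have [y [Ay nAy]] : A `&` ~` A !=set0.
    apply: clA; apply/nbhs_fanE; exists (~` A); split => // _ b.
    apply: contrapT => Ab; apply: finA; exists b => m.
    by apply: contrapT => nAb; apply: Ab; exists m => k mk Abk; apply: nAb; exists k.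
  exact: nAy.
exists (A `&` range (fun k => Some (b, k))); split; first exact: subIsetl.
split.
  apply: sub_countable (countableP [set: nat]).
  by apply: card_le_trans (subset_card_le (@subIsetr _ _ _)) (card_image_le _ _).
move=> W /nbhs_fanE[V [oV VN VW]]; have [m Vb] := oV VN b.
have [k mk Abk] := Ab m.
by exists (Some (b, k)); split; [split => //; exists k|apply: VW; exact: Vb].
Qed.

Lemma closure_prodP (X Y : topologicalType) (E : set (X * Y)) (x : X) (y : Y) :
  closure E (x, y) <->
  forall V U, nbhs x V -> nbhs y U -> exists a b, [/\ E (a, b), V a & U b].
Proof.
split=> [clE V U xV yU|clE W [[V U] [/= xV yU] VUW]].
  have [[a b] [Eab [/= Va Ub]]] : E `&` (V `*` U) !=set0 by apply: clE; exists (V, U).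
  by exists a, b.
have [a [b [Eab Va Ub]]] := clE V U xV yU.
by exists (a, b); split => //; exact: VUW.
Qed.

Lemma countably_tight_prod_fst (X Y : topologicalType) (y : Y) :
  countably_tight (X * Y)%type -> countably_tight X.
Proof.
move=> ctXY x A clA.
have clAy : closure (A `*` [set y]) (x, y).
  apply/closure_prodP => V U xV yU; have [a [Aa Va]] := clA V xV.
  by exists a, y; split => //; exact: nbhs_singleton.
have [B [BA [cB clB]]] := ctXY _ _ clAy.
exists (fst @` B); split; first by move=> _ [p /BA[Ap _] <-].
split; first exact: sub_countable (card_image_le _ _) cB.
move=> W xW.
have [a [b [Bab Wa _]]] := iffLR (closure_prodP _ _ _) clB W setT xW filterT.
by exists a; split => //; exists (a, b).
Qed.

Lemma countable_enum (T : choiceType) (B : set T) :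
  countable B -> B !=set0 -> exists e : nat -> T, range e = B.
Proof.
move=> /countable_injP[f finj] [b0 Bb0].
pose e j := xget b0 [set b | B b /\ f b = j].
have eB j : B (e j) by rewrite /e; case: xgetP => [b _ []|].
exists e; apply/seteqP; split=> [_ [j _ <-]//|b Bb].
exists (f b) => //; apply: xget_unique => // b' [Bb' fb'].
by apply: finj; rewrite ?inE.
Qed.

Lemma countably_tight_closure_seq (X : topologicalType) (x : X) (A : set X) :
  countably_tight X -> closure A x ->
  exists e : nat -> X, (forall j, A (e j)) /\ closure (range e) x.
Proof.
move=> ctX clA; have [B [BA [cB clB]]] := ctX x A clA.
have [|e eB] := countable_enum cB.
  by have [b [Bb _]] := clB setT filterT; exists b.
by exists e; rewrite eB; split => // j; apply: BA; rewrite -eB; exists j.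
Qed.

Lemma mkseq_fixpoint (g : seq nat -> nat) :
  exists b : nat -> nat, forall k, b k = g (mkseq b k).
Proof.
pose pre k := iter k (fun t => rcons t (g t)) [::].
suff pre_mkseq k : mkseq (g \o pre) k = pre k.
  by exists (g \o pre) => k /=; rewrite pre_mkseq.
by elim: k => [//|k IH]; rewrite mkseqS IH /pre iterS.
Qed.

Lemma eventually_mkseq_neq (b b' : nat -> nat) :
  b' <> b -> exists m, forall k, (m <= k)%N -> mkseq b' k <> mkseq b k.
Proof.
move=> nbb'; have /existsNP[j bj] : ~ (forall j, b' j = b j).
  by move=> eqb; apply: nbb'; exact: funext.
exists j.+1 => k jk eqk; apply: bj.
by rewrite -(nth_mkseq 0%N b' jk) -(nth_mkseq 0%N b jk) eqk.
Qed.

Lemma countable_mkseq_separation (S : set (nat -> nat)) : countable S ->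
  exists m : (nat -> nat) -> nat,
    {in [set bk | S bk.1 /\ (m bk.1 <= bk.2)%N] &,
      injective (fun bk => mkseq bk.1 bk.2)}.
Proof.
move=> /countable_injP[i iinj].
have separated b N : exists m, forall b' k, S b' -> (i b' < N)%N -> b' <> b ->
    (m <= k)%N -> mkseq b' k <> mkseq b k.
  elim: N => [|N [m Hm]]; first by exists 0%N.
  have [[b' [Sb' ib' nb']]|none] := pselect (exists b', [/\ S b', i b' = N & b' <> b]).
    have [m' Hm'] := eventually_mkseq_neq nb'.
    exists (maxn m m') => c k Sc; rewrite ltnS leq_eqVlt geq_max.
    move=> /orP[/eqP icN|icN] ncb /andP[mk m'k]; last exact: Hm.
    have -> : c = b' by apply: iinj; rewrite ?inE // icN ib'.
    exact: Hm'.
  exists m => c k Sc; rewrite ltnS leq_eqVlt => /orP[/eqP icN|icN] ncb mk.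
    by exfalso; apply: none; exists c.
  exact: Hm.
have [m Hm] := choice (fun b => separated b (i b)).
exists m => -[b1 k] [b2 k'] /[!inE] -[Sb1 mk] [Sb2 mk'] /= eqs.
have kk' : k = k' by rewrite -(size_mkseq b1 k) eqs size_mkseq.
subst k'.
congr pair; apply: contrapT => nb12.
have [i12|i21|i12] := ltngtP (i b1) (i b2).
- exact: Hm b2 b1 k Sb1 i12 nb12 mk' eqs.
- exact: Hm b1 b2 k Sb2 i21 (nesym nb12) mk (esym eqs).
- by apply: nb12; apply: iinj; rewrite ?inE.
Qed.

Section FanDiagonal.
Variables (X : topologicalType) (x : X) (A : nat -> set X) (e : nat -> nat -> X).
Hypotheses (eA : forall n j, A n (e n j)) (e_cl : forall n, closure (range (e n)) x).

Definition fan_level (b : nat -> nat) k := pickle (mkseq b k).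

Definition fan_diagonal : set (X * fan) :=
  [set p | exists b k, p = (e (fan_level b k) (b k), Some (b, k))].

Lemma closure_fan_diagonal : closure fan_diagonal (x, None).
Proof.
apply/closure_prodP => V U xV /nbhs_fanE[B [oB BN BU]].
have /choice[g gV] : forall t : seq nat, exists j, V (e (pickle t) j).
  by move=> t; have [_ [[j _ <-] Vj]] := e_cl (pickle t) xV; exists j.
have [b bg] := mkseq_fixpoint g; have [m Bb] := oB BN b.
exists (e (fan_level b m) (b m)), (Some (b, m)); split; first by exists b, m.
- by rewrite [b m]bg; exact: gV.
- by apply: BU; exact: Bb.
Qed.

Lemma select_of_fan_diagonal (E : set (X * fan)) :
  E `<=` fan_diagonal -> countable E -> closure E (x, None) ->
  exists a : nat -> X, (forall n, A n (a n)) /\ closure (range a) x.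
Proof.
move=> ED cE clE.
pose S := [set b | exists a k, E (a, Some (b, k))].
have cS : countable S.
  pose spine (p : X * fan) := if p.2 is Some (b, _) then b else id.
  apply: sub_countable (card_le_trans (subset_card_le _) (card_image_le spine E)) cE.
  by move=> b [a [k Eb]]; exists (a, Some (b, k)).
have [m minj] := countable_mkseq_separation cS.
pose good := [set bk | S bk.1 /\ (m bk.1 <= bk.2)%N].
pose pick n :=
  xget ((id, 0%N) : (nat -> nat) * nat) [set bk | good bk /\ fan_level bk.1 bk.2 = n].
exists (fun n => e n ((pick n).1 (pick n).2)); split => // W xW.
pose U := [set y : fan | forall b k, y = Some (b, k) -> S b -> (m b <= k)%N].
have NU : nbhs (None : fan) U.
  apply/nbhs_fanE; exists U; split => // _ b.
  have [Sb|nSb] := pselect (S b); first by exists (m b) => k mk b' k' [<- <-].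
  by exists 0%N => k _ b' k' [<- _] /nSb.
have [a0 [y [Ey Wa Uy]]] := iffLR (closure_prodP _ _ _) clE W U xW NU.
have [b [k [ea0 ey]]] := ED _ Ey; subst a0 y.
have Sb : S b by exists (e (fan_level b k) (b k)), k.
have good_bk : good (b, k) by split; last exact: Uy.
have pick_bk : pick (fan_level b k) = (b, k).
  apply: xget_unique => // -[b' k'] [gb' /(pcan_inj pickleK) eqs].
  by apply: minj; rewrite ?inE.
exists (e (fan_level b k) (b k)); split => //.
by exists (fan_level b k) => //; rewrite /= pick_bk.
Qed.

End FanDiagonal.

Theorem corollary2p8 (X : topologicalType) :
  productively_countably_tight X -> forall x : X, S1_Omega x.
Proof.
move=> pctX x A OA.
have ctXfan := pctX fan countably_tight_fan.
have ctX := countably_tight_prod_fst (None : fan) ctXfan.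
have /choice[e He] := fun n => countably_tight_closure_seq ctX (OA n).2.
have eA n j := (He n).1 j; have e_cl n := (He n).2.
have [E [ED [cE clE]]] := ctXfan _ _ (closure_fan_diagonal e_cl).
have [a [aA a_cl]] := select_of_fan_diagonal eA ED cE clE.
exists a; split => //; split => // -[n _ an].
by apply: (OA n).1; rewrite -an.
Qed.
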